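(* Suppose $q^{2k}\neq1$. Let $a,b,c$ be pairwise distinct elements of $\{1,\dots,n\}$, and let $\phi_a$ (resp. $\phi_c$) denote either $\psi_a$ or $\psi_a^*$ (resp. $\psi_c$ or $\psi_c^*$). Then in $\mathrm{Cl}_q(n,k)$: \[ [\psi_a\psi_b^*,\psi_b\psi_a^*] = \frac{(\omega_a\omega_b^{-1})^k-(\omega_a\omega_b^{-1})^{-k}}{q^k-q^{-k}},\qquad [\psi_a\psi_b,\psi_b^*\psi_a^*] = \frac{(q\omega_a\omega_b)^k-(q\omega_a\omega_b)^{-k}}{q^k-q^{-k}}, \] \[ [\phi_a\psi_b,\psi_b^*\phi_c]_{q^{\pm k}} = \omega_b^{\mp k}\phi_a\phi_c,\qquad \psi_a\psi_a^*\pm\psi_a^*\psi_a = \frac{q^k\omega_a^k\pm\omega_a^{-k}}{q^k\pm1}, \] where $[A,B]=AB-BA$ and $[A,B]_x=AB-xBA$ (in each identity the signs are taken consistently).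
   Context: Let $\mathbb{k}$ be a field of characteristic different from $2$, let $q\in\mathbb{k}^\times$, and let $n,k$ be positive integers. The quantum Clifford algebra $\mathrm{Cl}_q(n,k)$ is the unital associative $\mathbb{k}$-algebra generated by $\psi_a,\psi_a^*,\omega_a,\omega_a^{-1}$ for $a\in\{1,\dots,n\}$, subject to the relations (for all $a,b\in\{1,\dots,n\}$): $\omega_a\omega_b=\omega_b\omega_a$; $\omega_a\omega_a^{-1}=1$; $\omega_a\psi_b=q^{\delta_{ab}}\psi_b\omega_a$; $\omega_a\psi_b^*=q^{-\delta_{ab}}\psi_b^*\omega_a$; $\psi_a\psi_b+\psi_b\psi_a=0$; $\psi_a^*\psi_b^*+\psi_b^*\psi_a^*=0$; $\psi_a\psi_a^*+q^k\psi_a^*\psi_a=\omega_a^{-k}$; $\psi_a\psi_a^*+q^{-k}\psi_a^*\psi_a=\omega_a^{k}$; and $\psi_a\psi_b^*+\psi_b^*\psi_a=0$ if $a\neq b$. *)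

From HB Require Import structures.
From mathcomp Require Import all_boot all_order all_algebra.
Set Implicit Arguments. Unset Strict Implicit. Unset Printing Implicit Defensive.
Import Order.TTheory GRing.Theory.
Local Open Scope ring_scope.

Definition comm (R : pzRingType) (x y : R) : R := x * y - y * x.
Definition qcomm (F : fieldType) (A : algType F) (x y : A) (t : F) : A :=
  x * y - t *: (y * x).

(* The defining relations of Cl_q(n,k), realized by elements
   psi a, psis a (= psi_a^* ), om a (= omega_a), omi a (= omega_a^{-1})
   of an F-algebra A.  Generators are indexed by 'I_n = {0,..,n-1}. *)
Definition Clq_rels (F : fieldType) (A : algType F) (n k : nat) (q : F)
    (psi psis om omi : 'I_n -> A) : Prop :=
  forall a b : 'I_n,
    [/\ om a * om b = om b * om a,
        om a * omi a = 1 /\ omi a * om a = 1,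
        om a * psi b = q ^+ (a == b) *: (psi b * om a),
        om a * psis b = q ^- (a == b) *: (psis b * om a)
      & [/\ psi a * psi b + psi b * psi a = 0,
            psis a * psis b + psis b * psis a = 0,
            psi a * psis a + q ^+ k *: (psis a * psi a) = omi a ^+ k,
            psi a * psis a + q ^- k *: (psis a * psi a) = om a ^+ k
          & a != b -> psi a * psis b + psis b * psi a = 0]].

From HB Require Import structures.
From mathcomp Require Import all_boot all_order all_algebra.

Set Implicit Arguments.
Unset Strict Implicit.
Unset Printing Implicit Defensive.
Import Order.TTheory GRing.Theory.
Local Open Scope ring_scope.

(* Write X_a = psi_a psi_a^* and Y_a = psi_a^* psi_a.  The two quadratic
   relations say omega_a^k = X_a + q^-k Y_a and omega_a^-k = X_a + q^k Y_a;
   eliminating gives the last identity.  Generators with distinct indices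
   anticommute, so X_a, Y_a commute with X_b, Y_b and the commutators collapse
   to X_a Y_b - Y_a X_b, X_b X_a - Y_a Y_b and (X_b + t Y_b) phi_a phi_c.
   Substituting the expressions of omega^(+-k) into the right-hand sides and
   expanding yields (q^k - q^-k) times the first two. *)

Section LinearCombinations.
Variables (F : fieldType) (A : algType F).

Lemma mulr_addZ (x1 y1 x2 y2 : A) (s t : F) :
  (x1 + s *: y1) * (x2 + t *: y2)
  = x1 * x2 + t *: (x1 * y2) + (s *: (y1 * x2) + (s * t) *: (y1 * y2)).
Proof. by rewrite mulrDl !mulrDr -!scalerAl -!scalerAr scalerA. Qed.

Lemma scale_addZ_add (x y : A) (s t : F) : s * t = 1 ->
  s *: (x + t *: y) + (x + s *: y) = (s + 1) *: (x + y).
Proof.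
move=> st1; rewrite scalerDr scalerA st1 scale1r !scalerDl !scale1r.
by rewrite scalerDr addrACA [RHS]addrACA [y + _]addrC.
Qed.

Lemma scale_addZ_sub (x y : A) (s t : F) : s * t = 1 ->
  s *: (x + t *: y) - (x + s *: y) = (s - 1) *: (x - y).
Proof.
move=> st1; rewrite scalerDr scalerA st1 scale1r !scalerBl !scale1r scalerBr.
by rewrite opprD opprB [RHS]addrACA [- (s *: y) - x]addrC.
Qed.

Lemma scale_mul_addZ_sub (x1 y1 x2 y2 : A) (s t : F) : s * t = 1 ->
  s *: ((x1 + t *: y1) * (x2 + t *: y2))
    - t *: ((x1 + s *: y1) * (x2 + s *: y2))
  = (s - t) *: (x1 * x2 - y1 * y2).
Proof.
move=> st1; have ts1 : t * s = 1 by rewrite mulrC.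
rewrite !mulr_addZ !scalerDr !scalerA st1 ts1 !scale1r.
rewrite mulrA st1 mul1r mulrA ts1 mul1r.
rewrite opprD addrACA [t *: _ + _]addrC addrKA [y1 * x2 + _]addrC addrKA.
by rewrite -!scalerBl scalerN -scaleNr opprB.
Qed.

Lemma mul_addZ_sub_comm (x1 y1 x2 y2 : A) (s t : F) :
  GRing.comm x1 x2 -> GRing.comm y1 y2 ->
  GRing.comm x1 y2 -> GRing.comm y1 x2 ->
  (x1 + t *: y1) * (x2 + s *: y2) - (x2 + t *: y2) * (x1 + s *: y1)
  = (s - t) *: (x1 * y2 - y1 * x2).
Proof.
move=> c12 d12 cd ec.
rewrite !mulr_addZ -c12 -d12 -cd -ec mulrC.
rewrite opprD addrACA !opprD [x1 * x2 + _ + _]addrACA subrr add0r.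
rewrite [t *: _ + _ + _]addrACA subrr addr0 -!scalerBr.
by rewrite -[y1 * x2 - _]opprB scalerN scalerBl.
Qed.
End LinearCombinations.

Lemma subr_invf_neq0 (F : fieldType) (x : F) :
  x != 0 -> x ^+ 2 != 1 -> x - x^-1 != 0.
Proof.
move=> x0; apply: contra; rewrite subr_eq0 => /eqP x_eqV.
by rewrite expr2 {1}x_eqV mulVf.
Qed.

Lemma sqrf_neq1 (F : idomainType) (x : F) :
  x ^+ 2 != 1 -> x - 1 != 0 /\ x + 1 != 0.
Proof. by rewrite sqrf_eq1 negb_or subr_eq0 addr_eq0 => /andP. Qed.

Section Anticommutation.
Variable R : pzRingType.
Implicit Types x y z : R.

Definition anticomm x y := x * y = - (y * x).

Lemma anticomm_sym x y : anticomm x y -> anticomm y x.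
Proof. by rewrite /anticomm => ->; rewrite opprK. Qed.

Lemma commr_anticomm2 x y z :
  anticomm x y -> anticomm x z -> GRing.comm x (y * z).
Proof.
by move=> xy xz; rewrite /GRing.comm mulrA xy mulNr -mulrA xz mulrN opprK mulrA.
Qed.

Lemma commr_inv x z z' : z * z' = 1 -> z' * z = 1 ->
  GRing.comm x z -> GRing.comm x z'.
Proof.
move=> zz' z'z xz; rewrite /GRing.comm -[z' * x]mulr1 -zz' mulrA -(mulrA z').
by rewrite xz mulrA z'z mul1r.
Qed.

End Anticommutation.

Lemma qcomm_anticomm (F : fieldType) (A : algType F) (u v p p' : A) (t : F) :
  anticomm u p -> anticomm u p' -> anticomm v p -> anticomm u v ->
  qcomm (u * p) (p' * v) t = (p * p' + t *: (p' * p)) * (u * v).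
Proof.
move=> up up' vp uv.
have pp'_uv : u * p * (p' * v) = p * p' * (u * v).
  by rewrite mulrA -(mulrA u) (commr_anticomm2 up up') -!mulrA.
have p'p_uv : p' * v * (u * p) = - (p' * p * (u * v)).
  rewrite -!mulrA up mulrN mulrA vp mulNr opprK -mulrA (anticomm_sym uv).
  by rewrite !mulrN mulrA.
by rewrite /qcomm pp'_uv p'p_uv scalerN opprK mulrDl scalerAl.
Qed.

Section QuantumClifford.
Variables (F : fieldType) (A : algType F) (n k : nat) (q : F).
Variables (psi psis om omi : 'I_n -> A).
Hypothesis rels : Clq_rels k q psi psis om omi.

Definition phi (s : bool) (a : 'I_n) := if s then psi a else psis a.

Local Notation X a := (psi a * psis a).
Local Notation Y a := (psis a * psi a).

Lemma X_add_Y_omi a : X a + q ^+ k *: Y a = omi a ^+ k.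
Proof. by have [_ _ _ _ [_ _ ->]] := rels a a. Qed.

Lemma X_add_Y_om a : X a + q ^- k *: Y a = om a ^+ k.
Proof. by have [_ _ _ _ [_ _ _ ->]] := rels a a. Qed.

Lemma comm_om a b : GRing.comm (om a) (om b).
Proof. by have [] := rels a b. Qed.

Lemma comm_om_omi a b : GRing.comm (om a) (omi b).
Proof.
have [_ [bb' b'b] _ _ _] := rels b b.
exact: commr_inv bb' b'b (comm_om a b).
Qed.

Lemma comm_omi a b : GRing.comm (omi a) (omi b).
Proof.
have [_ [aa' a'a] _ _ _] := rels a a.
by apply/commr_sym/(commr_inv aa' a'a)/commr_sym/comm_om_omi.
Qed.

Lemma anticomm_phi s t a b : a != b -> anticomm (phi s a) (phi t b).
Proof.
move=> ab; apply/eqP; rewrite -addr_eq0; apply/eqP.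
have [_ _ _ _ [psi_ab psis_ab _ _ psi_psis_ab]] := rels a b.
have [_ _ _ _ [_ _ _ _ psi_psis_ba]] := rels b a.
case: s; case: t => //=; first exact: psi_psis_ab.
by rewrite addrC psi_psis_ba // eq_sym.
Qed.

Lemma comm_phi_pair s t t' a b : a != b ->
  GRing.comm (phi s a) (phi t b * phi t' b).
Proof. by move=> ab; apply: commr_anticomm2; apply: anticomm_phi. Qed.

Lemma comm_phi_pairs s s' t t' a b : a != b ->
  GRing.comm (phi s a * phi s' a) (phi t b * phi t' b).
Proof. by move=> ab; apply/commr_sym/commrM; apply/commr_sym/comm_phi_pair. Qed.

Lemma comm_X_Y a b : a != b ->
  [/\ GRing.comm (X a) (X b), GRing.comm (X a) (Y b),
       GRing.comm (Y a) (X b) & GRing.comm (Y a) (Y b)].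
Proof.
move=> ab; split.
- exact: (comm_phi_pairs true false true false ab).
- exact: (comm_phi_pairs true false false true ab).
- exact: (comm_phi_pairs false true true false ab).
- exact: (comm_phi_pairs false true false true ab).
Qed.

Lemma phi_sandwich s s' t t' a b : a != b ->
  phi s a * phi t b * (phi t' b * phi s' a)
  = phi t b * phi t' b * (phi s a * phi s' a).
Proof.
by move=> ab; rewrite mulrA -(mulrA (phi s a)) comm_phi_pair // -mulrA.
Qed.

Hypotheses (q_neq0 : q != 0) (q2k_neq1 : q ^+ (2 * k) != 1).

Let qk_neq0 : q ^+ k != 0. Proof. exact: expf_neq0. Qed.
Let qk_sqr_neq1 : (q ^+ k) ^+ 2 != 1. Proof. by rewrite -exprM mulnC. Qed.
Let qk_mulV : q ^+ k * q ^- k = 1. Proof. exact: mulfV. Qed.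

Lemma comm_psi_psis a b : a != b ->
  comm (psi a * psis b) (psi b * psis a)
  = (q ^+ k - q ^- k)^-1 *: ((om a * omi b) ^+ k - (om b * omi a) ^+ k).
Proof.
move=> ab; have ba : b != a by rewrite eq_sym.
have [cXX cXY cYX cYY] := comm_X_Y ab.
rewrite /comm (phi_sandwich true false false true ab).
rewrite (phi_sandwich true false false true ba) /= -cXY.
rewrite (exprMn_comm _ (comm_om_omi a b)) (exprMn_comm _ (comm_om_omi b a)).
rewrite -!X_add_Y_om -!X_add_Y_omi mul_addZ_sub_comm //.
by rewrite scalerA mulVf ?scale1r ?subr_invf_neq0.
Qed.

Lemma comm_psi_psis_pair a b : a != b ->
  comm (psi a * psi b) (psis b * psis a)
  = (q ^+ k - q ^- k)^-1 *:
      ((q *: (om a * om b)) ^+ k - (q^-1 *: (omi b * omi a)) ^+ k).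
Proof.
move=> ab; have ba : b != a by rewrite eq_sym.
have [_ _ _ cYY] := comm_X_Y ab.
rewrite /comm (phi_sandwich true false true false ab).
rewrite (phi_sandwich false true false true ba) /= cYY.
rewrite !exprZn exprVn comm_om.
rewrite (exprMn_comm _ (comm_om b a)) (exprMn_comm _ (comm_omi b a)).
rewrite -!X_add_Y_om -!X_add_Y_omi scale_mul_addZ_sub //.
by rewrite scalerA mulVf ?scale1r ?subr_invf_neq0.
Qed.

Lemma qcomm_phi_psi_psis (t : F) sa sc a b c :
  a != b -> b != c -> a != c ->
  qcomm (phi sa a * psi b) (psis b * phi sc c) t
  = (X b + t *: Y b) * (phi sa a * phi sc c).
Proof.
move=> ab bc ac; have cb : c != b by rewrite eq_sym.
apply: qcomm_anticomm; first exact: (anticomm_phi sa true ab).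
- exact: (anticomm_phi sa false ab).
- exact: (anticomm_phi sc true cb).
- exact: anticomm_phi.
Qed.

Lemma X_add_Y a :
  X a + Y a = (q ^+ k + 1)^-1 *: (q ^+ k *: om a ^+ k + omi a ^+ k).
Proof.
have [_ qk1] := sqrf_neq1 qk_sqr_neq1.
by rewrite -X_add_Y_om -X_add_Y_omi scale_addZ_add // scalerA mulVf ?scale1r.
Qed.

Lemma X_sub_Y a :
  X a - Y a = (q ^+ k - 1)^-1 *: (q ^+ k *: om a ^+ k - omi a ^+ k).
Proof.
have [qk1 _] := sqrf_neq1 qk_sqr_neq1.
by rewrite -X_add_Y_om -X_add_Y_omi scale_addZ_sub // scalerA mulVf ?scale1r.
Qed.

End QuantumClifford.

Theorem lemma3p16 (F : fieldType) (A : algType F) (n k : nat) (q : F)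
    (psi psis om omi : 'I_n -> A) :
  (2%:R != 0 :> F) -> (0 < n)%N -> (0 < k)%N -> q != 0 ->
  Clq_rels k q psi psis om omi ->
  q ^+ (2 * k) != 1 ->
  forall a b c : 'I_n, a != b -> b != c -> a != c ->
  forall sa sc : bool,
  let phia := if sa then psi a else psis a in
  let phic := if sc then psi c else psis c in
  [/\ comm (psi a * psis b) (psi b * psis a)
        = (q ^+ k - q ^- k)^-1 *: ((om a * omi b) ^+ k - (om b * omi a) ^+ k),
      comm (psi a * psi b) (psis b * psis a)
        = (q ^+ k - q ^- k)^-1 *:
            ((q *: (om a * om b)) ^+ k - (q^-1 *: (omi b * omi a)) ^+ k),
      qcomm (phia * psi b) (psis b * phic) (q ^+ k) = omi b ^+ k * (phia * phic),
      qcomm (phia * psi b) (psis b * phic) (q ^- k) = om b ^+ k * (phia * phic)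
    & psi a * psis a + psis a * psi a
        = (q ^+ k + 1)^-1 *: (q ^+ k *: om a ^+ k + omi a ^+ k)
      /\ psi a * psis a - psis a * psi a
        = (q ^+ k - 1)^-1 *: (q ^+ k *: om a ^+ k - omi a ^+ k)].
Proof.
move=> _ _ _ q_neq0 rels q2k_neq1 a b c ab bc ac sa sc phia phic.
have qcommE t := qcomm_phi_psi_psis rels t sa sc ab bc ac.
split.
- exact: (comm_psi_psis rels q_neq0 q2k_neq1 ab).
- exact: (comm_psi_psis_pair rels q_neq0 q2k_neq1 ab).
- by rewrite [LHS]qcommE (X_add_Y_omi rels).
- by rewrite [LHS]qcommE (X_add_Y_om rels).
- by split; [apply: (X_add_Y rels) | apply: (X_sub_Y rels)].
Qed.
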